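(* Consider the system $\xi^+=F(\xi,u,\omega)$, $\omega\in\Omega(\xi,u)$, with sensor output $\upsilon=H(\xi,u,\omega)$, estimator $\hat\xi(k)=\Phi^\xi_k(\overline\xi,\mathbf u_{0:k-1},\boldsymbol\upsilon_{0:k-1})$, control $u=\hat\kappa(\hat\xi)$, estimation error $\varepsilon(k)=G_\varepsilon(\xi(k))-\hat\xi(k)$, $\overline\varepsilon:=G_\varepsilon(\xi(0))-\overline\xi$, and output $\zeta=G(\hat\xi)$. Suppose $\Phi^\xi_0$ is the identity map and there exist constants $a_1,a_2,a_3,a_4,c_1,c_2,c_3,c_4>0$, a closed set $\mathcal{S}\subseteq\Xi\times\hat\Xi$ that is robustly positively invariant, functions $V:\hat\Xi\to\mathbb{R}_{\ge0}$, $V_\varepsilon:\Xi\times\hat\Xi\to\mathbb{R}_{\ge0}$, and $\sigma,\sigma_\varepsilon\in\mathcal{K}$, such that $\frac{a_4c_4}{a_3c_1}<1$, $\frac{a_4c_4}{a_3c_3}<\frac{c_1}{c_1+c_2}$, and along every closed-loop trajectory with $(\xi(0),\overline\xi)\in\mathcal{S}$, at every time (with $^+$ denoting the next time step): $a_1|\zeta|^2\le V(\hat\xi)\le a_2|\zeta|^2$; $V(\hat\xi^+)\le V(\hat\xi)-a_3|\zeta|^2+a_4|(\varepsilon,\varepsilon^+)|^2+\sigma(|\omega|)$; $c_1|\varepsilon|^2\le V_\varepsilon(\xi,\hat\xi)\le c_2|\varepsilon|^2$; $V_\varepsilon(\xi^+,\hat\xi^+)\le V_\varepsilon(\xi,\hat\xi)-c_3|\varepsilon|^2+c_4|\zeta|^2+\sigma_\varepsilon(|\omega|)$.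 Then the closed-loop system is robustly exponentially stable in $\mathcal{S}$ w.r.t. $\zeta$: there exist $c_\zeta>0$, $\lambda_\zeta\in(0,1)$ and $\sigma_\zeta\in\mathcal{K}$ such that \[ |(\zeta(k),\varepsilon(k))|\le c_\zeta\lambda_\zeta^k|(\zeta(0),\overline\varepsilon)|+\sum_{i=0}^k\lambda_\zeta^i\sigma_\zeta(|\omega(k-i)|) \] for all $k\ge0$ and all closed-loop trajectories with $(\xi(0),\overline\xi)\in\mathcal{S}$.
   Context: $\Xi\subseteq\mathbb{R}^{n_\xi}$, $\hat\Xi\subseteq\mathbb{R}^{n_{\hat\xi}}$, $\Upsilon\subseteq\mathbb{R}^{n_\upsilon}$ are closed, $\mathbb{U}$ is the input set; $F(\xi,u,\omega)\in\Xi$ and $H(\xi,u,\omega)\in\Upsilon$ for $(\xi,u)\in\Xi\times\mathbb{U}$, $\omega\in\Omega(\xi,u)\ni0$; $\Phi^\xi_k:\hat\Xi\times\mathbb{U}^k\times\Upsilon^k\to\hat\Xi$; $\hat\kappa:\hat\Xi\to\mathbb{U}$; $G_\varepsilon:\Xi\to\hat\Xi$; $G:\hat\Xi\to\mathbb{R}^{n_\zeta}$; $\overline\xi\in\hat\Xi$ is the prior guess. A closed-loop trajectory is $(\boldsymbol\xi,\hat{\boldsymbol\xi},\mathbf u,\boldsymbol\omega,\boldsymbol\upsilon)$ with $\omega(k)\in\Omega(\xi(k),u(k))$, $\xi(k+1)=F(\xi(k),u(k),\omega(k))$, $\upsilon(k)=H(\xi(k),u(k),\omega(k))$, $\hat\xi(k)=\Phi^\xi_k(\overline\xi,\mathbf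 u_{0:k-1},\boldsymbol\upsilon_{0:k-1})$, $u(k)=\hat\kappa(\hat\xi(k))$. A closed set $\mathcal{S}$ is robustly positively invariant if every closed-loop trajectory with $(\xi(0),\overline\xi)\in\mathcal{S}$ satisfies $(\xi(k),\hat\xi(k))\in\mathcal{S}$ for all $k$. $\mathcal{K}$: continuous strictly increasing functions $\mathbb{R}_{\ge0}\to\mathbb{R}_{\ge0}$ vanishing at $0$. *)

From HB Require Import structures.
From mathcomp Require Import all_boot all_order all_algebra.
From mathcomp Require Import all_classical all_reals all_analysis.
Set Implicit Arguments. Unset Strict Implicit. Unset Printing Implicit Defensive.
Import Order.TTheory GRing.Theory Num.Theory.
Import numFieldNormedType.Exports.
Local Open Scope classical_set_scope.
Local Open Scope ring_scope.

Definition enorm (R : realType) (n : nat) (x : 'rV[R]_n) : R :=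
  Num.sqrt (\sum_(i < n) x ord0 i ^+ 2).

Definition classK (R : realType) (f : R -> R) : Prop :=
  f 0 = 0 /\
  {within [set x : R | 0 <= x], continuous f} /\
  (forall x y : R, 0 <= x -> x < y -> f x < f y).

Definition closed_loop_traj (R : realType) (nx nxh nu nw ny : nat)
  (F : 'rV[R]_nx -> 'rV[R]_nu -> 'rV[R]_nw -> 'rV[R]_nx)
  (H : 'rV[R]_nx -> 'rV[R]_nu -> 'rV[R]_nw -> 'rV[R]_ny)
  (Omega : 'rV[R]_nx -> 'rV[R]_nu -> set 'rV[R]_nw)
  (Phi : forall k : nat, 'rV[R]_nxh -> ('I_k -> 'rV[R]_nu) ->
                         ('I_k -> 'rV[R]_ny) -> 'rV[R]_nxh)
  (kappa : 'rV[R]_nxh -> 'rV[R]_nu)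
  (xbar : 'rV[R]_nxh)
  (xi : nat -> 'rV[R]_nx) (xih : nat -> 'rV[R]_nxh) (u : nat -> 'rV[R]_nu)
  (w : nat -> 'rV[R]_nw) (y : nat -> 'rV[R]_ny) : Prop :=
  forall k : nat,
    w k \in Omega (xi k) (u k) /\
    xi k.+1 = F (xi k) (u k) (w k) /\
    y k = H (xi k) (u k) (w k) /\
    xih k = Phi k xbar (fun i : 'I_k => u i) (fun i : 'I_k => y i) /\
    u k = kappa (xih k).

Definition RPI (R : realType) (nx nxh nu nw ny : nat)
  (F : 'rV[R]_nx -> 'rV[R]_nu -> 'rV[R]_nw -> 'rV[R]_nx)
  (H : 'rV[R]_nx -> 'rV[R]_nu -> 'rV[R]_nw -> 'rV[R]_ny)
  (Omega : 'rV[R]_nx -> 'rV[R]_nu -> set 'rV[R]_nw)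
  (Phi : forall k : nat, 'rV[R]_nxh -> ('I_k -> 'rV[R]_nu) ->
                         ('I_k -> 'rV[R]_ny) -> 'rV[R]_nxh)
  (kappa : 'rV[R]_nxh -> 'rV[R]_nu)
  (S : set ('rV[R]_nx * 'rV[R]_nxh)) : Prop :=
  closed S /\
  forall xbar xi xih u w y,
    closed_loop_traj F H Omega Phi kappa xbar xi xih u w y ->
    S (xi 0%N, xbar) -> forall k, S (xi k, xih k).

From HB Require Import structures.
From mathcomp Require Import all_boot all_order all_algebra.
From mathcomp Require Import all_classical all_reals all_analysis.
From mathcomp Require Import ring lra.
Import Order.TTheory GRing.Theory Num.Theory.
Import numFieldNormedType.Exports.
Local Open Scope classical_set_scope.
Local Open Scope ring_scope.

(* The combined function [L = V + nu Veps] is an ISS-Lyapunov function for the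
   pair [(zeta, eps)].  The troublesome term [a4 |eps+|^2] in the decrease of [V]
   is paid for by [c1 |eps+|^2 <= Veps+], so that [V + nu Veps] decreases like
   [V + mu Veps] with [mu = nu + a4 / c1]; the small-gain conditions leave room for
   an [mu] making the coefficients of [|zeta|^2] and [|eps|^2] negative.  Hence
   [L+ <= rho L + (sigma + mu sigma_eps)] with [rho < 1], and since [L] is
   equivalent to [|zeta|^2 + |eps|^2], iterating and taking square roots
   (subadditivity of the square root) gives the exponential bound. *)

Section SqrtInequalities.
Context {R : rcfType}.
Implicit Types a b : R.

Lemma sqrtrD_le {a b} : 0 <= a -> 0 <= b ->
  Num.sqrt (a + b) <= Num.sqrt a + Num.sqrt b.
Proof.
move=> a_ge0 b_ge0.
have sa := sqrtr_ge0 a; have sb := sqrtr_ge0 b.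
rewrite -[leRHS]ger0_norm ?addr_ge0 // -sqrtr_sqr ler_sqrt ?sqr_ge0 //.
rewrite sqrrD !sqr_sqrtr //; have := mulr_ge0 sa sb; lra.
Qed.

Lemma sqrtr_sum_le (I : Type) (r : seq I) (P : pred I) (F : I -> R) :
  (forall i, P i -> 0 <= F i) ->
  Num.sqrt (\sum_(i <- r | P i) F i) <= \sum_(i <- r | P i) Num.sqrt (F i).
Proof.
move=> F_ge0.
suff [] : 0 <= \sum_(i <- r | P i) F i /\
          Num.sqrt (\sum_(i <- r | P i) F i) <= \sum_(i <- r | P i) Num.sqrt (F i).
  by [].
apply: (big_ind2 (fun x y => 0 <= x /\ Num.sqrt x <= y)).
- by rewrite sqrtr0.
- move=> a1 b1 a2 b2 [a1_ge0 le1] [a2_ge0 le2]; split; first exact: addr_ge0.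
  exact: le_trans (sqrtrD_le a1_ge0 a2_ge0) (lerD le1 le2).
- by move=> i Pi; split; [exact: F_ge0|].
Qed.

Lemma sqrtrX a k : 0 <= a -> Num.sqrt (a ^+ k) = Num.sqrt a ^+ k.
Proof.
move=> a_ge0; elim: k => [|k IHk]; first by rewrite !expr0 sqrtr1.
by rewrite !exprS sqrtrM // IHk.
Qed.

End SqrtInequalities.

(* Keeping [n k] on the left is what makes the bound inductive. *)
Lemma geometric_recursion_bound {R : numDomainType} {L n : nat -> R} {rho : R} :
  0 <= rho -> (forall k, L k.+1 <= rho * (L k + n k)) ->
  forall k, L k + n k <= rho ^+ k * L 0%N + \sum_(i < k.+1) rho ^+ i * n (k - i)%N.
Proof.
move=> rho_ge0 rec; elim=> [|k IHk].
  by rewrite big_ord_recl big_ord0 !expr0 !mul1r addr0.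
rewrite big_ord_recl expr0 mul1r subn0 (addrC (L k.+1)) [leRHS]addrCA lerD2l.
have -> : rho ^+ k.+1 * L 0%N + \sum_(i < k.+1) rho ^+ lift ord0 i * n (k.+1 - lift ord0 i)%N
        = rho * (rho ^+ k * L 0%N + \sum_(i < k.+1) rho ^+ i * n (k - i)%N).
  rewrite mulrDr mulrA -exprS mulr_sumr; congr (_ + _).
  by apply: eq_bigr => i _; rewrite lift0 subSS exprS mulrA.
exact: le_trans (rec k) (ler_wpM2l rho_ge0 IHk).
Qed.

Lemma contraction_sqrt_bound {R : rcfType} (x L d : nat -> R) (kap K rho : R) :
  0 < kap -> 0 < rho -> 0 <= K ->
  (forall k, 0 <= x k) -> (forall k, 0 <= d k) ->
  (forall k, kap * x k <= L k) -> L 0%N <= K * x 0%N ->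
  (forall k, L k.+1 <= rho * L k + d k) ->
  forall k, Num.sqrt (x k) <= Num.sqrt (K / kap) * Num.sqrt rho ^+ k * Num.sqrt (x 0%N)
    + \sum_(i < k.+1) Num.sqrt rho ^+ i * Num.sqrt ((kap * rho)^-1 * d (k - i)%N).
Proof.
move=> kap_gt0 rho_gt0 K_ge0 x_ge0 d_ge0 L_lb L0_ub rec k.
have kap_ge0 := ltW kap_gt0; have rho_ge0 := ltW rho_gt0.
pose n j := (kap * rho)^-1 * d j.
have n_ge0 j : 0 <= n j by rewrite /n mulr_ge0 // invr_ge0 mulr_ge0.
have rec_scaled j : L j.+1 / kap <= rho * (L j / kap + n j).
  have -> : rho * (L j / kap + n j) = (rho * L j + d j) / kap.
    by rewrite /n; field; rewrite !gt_eqF.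
  by rewrite ler_pM2r ?invr_gt0.
have lin : x k <= K / kap * rho ^+ k * x 0%N + \sum_(i < k.+1) rho ^+ i * n (k - i)%N.
  have x_le j : x j <= L j / kap by rewrite ler_pdivlMr // mulrC.
  have L0 : L 0%N / kap <= K / kap * x 0%N by rewrite mulrAC ler_pM2r ?invr_gt0.
  have := geometric_recursion_bound rho_ge0 rec_scaled k.
  have := ler_wpM2l (exprn_ge0 k rho_ge0) L0.
  have := x_le k; have := n_ge0 k.
  lra.
have Krho_ge0 : 0 <= K / kap * rho ^+ k.
  by rewrite mulr_ge0 ?exprn_ge0 ?divr_ge0.
have sum_ge0 : 0 <= \sum_(i < k.+1) rho ^+ i * n (k - i)%N.
  by rewrite sumr_ge0 // => i _; rewrite mulr_ge0 ?exprn_ge0.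
apply: le_trans (ler_wsqrtr lin) _.
apply: le_trans (sqrtrD_le (mulr_ge0 Krho_ge0 (x_ge0 0%N)) sum_ge0) _.
apply: lerD.
  by rewrite !sqrtrM ?divr_ge0 // sqrtrX.
rewrite [leRHS](eq_bigr (fun i : 'I_k.+1 => Num.sqrt (rho ^+ i * n (k - i)%N))).
  by apply: sqrtr_sum_le => i _; rewrite mulr_ge0 ?exprn_ge0.
by move=> i _; rewrite sqrtrM ?exprn_ge0 // sqrtrX.
Qed.

Section ClassK.
Context {R : realType}.
Implicit Types f g : R -> R.

Lemma classK_ge0 {f x} : classK f -> 0 <= x -> 0 <= f x.
Proof.
move=> [f0 [_ f_incr]]; rewrite le_eqVlt => /predU1P[<-|x_gt0]; first by rewrite f0.
by rewrite -f0 ltW // f_incr.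
Qed.

Lemma classKD f g : classK f -> classK g -> classK (fun s => f s + g s).
Proof.
move=> [f0 [f_cont f_incr]] [g0 [g_cont g_incr]].
split; first by rewrite f0 g0 addr0.
split; first by move=> x; apply: cvgD; [exact: f_cont|exact: g_cont].
by move=> x y x_ge0 xy; rewrite ltrD ?f_incr ?g_incr.
Qed.

Lemma classKZ c f : 0 < c -> classK f -> classK (fun s => c * f s).
Proof.
move=> c_gt0 [f0 [f_cont f_incr]].
split; first by rewrite f0 mulr0.
split; first by move=> x; apply: cvgMl_tmp; exact: f_cont.
by move=> x y x_ge0 xy; rewrite ltr_pM2l // f_incr.
Qed.

Lemma classK_sqrt f : classK f -> classK (fun s => Num.sqrt (f s)).
Proof.
move=> fK; have [f0 [f_cont f_incr]] := fK.
split; first by rewrite f0 sqrtr0.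
split; first by move=> x; apply: continuous_comp; [exact: f_cont|exact: sqrt_continuous].
move=> x y x_ge0 xy.
by rewrite ltr_sqrt ?f_incr // (le_lt_trans (classK_ge0 fK x_ge0)) ?f_incr.
Qed.

End ClassK.

Section EuclideanNorm.
Context {R : realType}.

Lemma enorm_ge0 {n} (x : 'rV[R]_n) : 0 <= enorm x.
Proof. exact: sqrtr_ge0. Qed.

Lemma enorm_row_mx_sqr {n1 n2} (a : 'rV[R]_n1) (b : 'rV[R]_n2) :
  enorm (row_mx a b) ^+ 2 = enorm a ^+ 2 + enorm b ^+ 2.
Proof.
rewrite !sqr_sqrtr ?sumr_ge0 // => [|i _|i _|i _]; rewrite ?sqr_ge0 //.
by rewrite big_split_ord; congr (_ + _); apply: eq_bigr => i _;
  rewrite ?row_mxEl ?row_mxEr.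
Qed.

Lemma enorm_row_mx {n1 n2} (a : 'rV[R]_n1) (b : 'rV[R]_n2) :
  enorm (row_mx a b) = Num.sqrt (enorm a ^+ 2 + enorm b ^+ 2).
Proof. by rewrite -enorm_row_mx_sqr sqrtr_sqr ger0_norm ?enorm_ge0. Qed.

End EuclideanNorm.

Section LyapunovPair.
Context {R : realType}.
Context {a1 a2 a3 a4 c1 c2 c3 c4 : R}.
Hypotheses (a1_gt0 : 0 < a1) (a2_gt0 : 0 < a2) (a3_gt0 : 0 < a3) (a4_gt0 : 0 < a4).
Hypotheses (c1_gt0 : 0 < c1) (c2_gt0 : 0 < c2) (c3_gt0 : 0 < c3) (c4_gt0 : 0 < c4).
Hypothesis small_gain1 : a4 * c4 / (a3 * c1) < 1.
Hypothesis small_gain2 : a4 * c4 / (a3 * c3) < c1 / (c1 + c2).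

(* [mu] is the weight of the [Veps]-decrease in the combined function; it must
   exceed [a4 / c1] (so that [nu > 0]) and [a4 (c1 + c2) / (c1 c3)] (so that [eps]
   is dissipated) while staying below [a3 / c4] (so that [zeta] is dissipated).
   The two small-gain hypotheses say exactly that such an [mu] exists. *)
Let M := Num.max (a4 / c1) (a4 * (c1 + c2) / (c1 * c3)).
Let mu := (M + a3 / c4) / 2.
Let nu := mu - a4 / c1.
Let gam := Num.min (a3 - mu * c4) (mu * c3 - a4 - a4 * c2 / c1).
Let K := Num.max a2 (nu * c2).
Let kap := Num.min a1 (nu * c1).
(* [1 - gam / K] need not be positive; the max keeps [rho] away from [0]. *)
Let rho := Num.max (1 - gam / K) (1 / 2).

Let M_lt : M < a3 / c4.
Proof.
have prod1 := small_gain1; have prod2 := small_gain2.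
rewrite ltr_pdivrMr ?mulr_gt0 // mul1r in prod1.
rewrite ltr_pdivrMr ?mulr_gt0 // mulrAC ltr_pdivlMr ?addr_gt0 // in prod2.
rewrite gt_max; apply/andP; split.
  by rewrite ltr_pdivrMr // mulrAC ltr_pdivlMr.
by rewrite ltr_pdivrMr ?mulr_gt0 // mulrAC ltr_pdivlMr //; lra.
Qed.

Let mu_bounds : [/\ a4 / c1 < mu, a4 * (c1 + c2) / (c1 * c3) < mu & mu < a3 / c4].
Proof.
have : a4 / c1 <= M /\ a4 * (c1 + c2) / (c1 * c3) <= M.
  by rewrite /M !le_max !lexx orbT.
by have := M_lt; rewrite /mu; split; lra.
Qed.

Let nu_gt0 : 0 < nu.
Proof. by rewrite subr_gt0; case: mu_bounds. Qed.

Let gam_gt0 : 0 < gam.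
Proof.
have [_ lt2 lt3] := mu_bounds.
rewrite lt_min subr_gt0 -ltr_pdivlMr // lt3 /=.
have : a4 * (c1 + c2) / (c1 * c3) * c3 < mu * c3 by rewrite ltr_pM2r.
have -> : a4 * (c1 + c2) / (c1 * c3) * c3 = a4 + a4 * c2 / c1.
  by field; rewrite !gt_eqF.
by move=> ?; lra.
Qed.

Let K_gt0 : 0 < K.
Proof. by rewrite lt_max a2_gt0. Qed.

Let kap_gt0 : 0 < kap.
Proof. by rewrite lt_min a1_gt0 mulr_gt0. Qed.

Let rho_gt0 : 0 < rho.
Proof. by rewrite lt_max orbC divr_gt0. Qed.

Let rho_lt1 : rho < 1.
Proof. by rewrite gt_max gtrBl divr_gt0 //= ltr_pdivrMr // mul1r ltr1n. Qed.

Section Trajectory.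
Variables (z e V W s se : nat -> R).
Hypotheses (z_ge0 : forall k, 0 <= z k) (e_ge0 : forall k, 0 <= e k).
Hypothesis V_bounds : forall k, a1 * z k <= V k <= a2 * z k.
Hypothesis V_step : forall k, V k.+1 <= V k - a3 * z k + a4 * (e k + e k.+1) + s k.
Hypothesis W_bounds : forall k, c1 * e k <= W k <= c2 * e k.
Hypothesis W_step : forall k, W k.+1 <= W k - c3 * e k + c4 * z k + se k.

Let L k := V k + nu * W k.

Lemma combined_lyapunov_lower k : kap * (z k + e k) <= L k.
Proof.
have [V_lb _] := andP (V_bounds k); have [W_lb _] := andP (W_bounds k).
have : kap * z k <= a1 * z k by rewrite ler_wpM2r // ge_min lexx.
have : kap * e k <= nu * c1 * e k by rewrite ler_wpM2r // ge_min lexx orbT.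
have : nu * (c1 * e k) <= nu * W k by rewrite ler_wpM2l // ltW.
by rewrite /L; lra.
Qed.

Lemma combined_lyapunov_upper k : L k <= K * (z k + e k).
Proof.
have [_ V_ub] := andP (V_bounds k); have [_ W_ub] := andP (W_bounds k).
have : a2 * z k <= K * z k by rewrite ler_wpM2r // le_max lexx.
have : nu * c2 * e k <= K * e k by rewrite ler_wpM2r // le_max lexx orbT.
have : nu * W k <= nu * (c2 * e k) by rewrite ler_wpM2l // ltW.
by rewrite /L; lra.
Qed.

Lemma combined_lyapunov_decrease k :
  L k.+1 <= L k - gam * (z k + e k) + (s k + mu * se k).
Proof.
have [mu_gt_a4c1 _ _] := mu_bounds.
have a4c1_ge0 : 0 <= a4 / c1 by rewrite divr_ge0 ?ltW.
have : a4 * e k.+1 <= a4 / c1 * W k.+1.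
  have -> : a4 * e k.+1 = a4 / c1 * (c1 * e k.+1) by field; rewrite gt_eqF.
  by apply: ler_wpM2l => //; case/andP: (W_bounds k.+1).
have : a4 / c1 * W k <= a4 / c1 * (c2 * e k).
  by apply: ler_wpM2l => //; case/andP: (W_bounds k).
have : mu * W k.+1 <= mu * (W k - c3 * e k + c4 * z k + se k).
  by apply: ler_wpM2l => //; exact: le_trans a4c1_ge0 (ltW mu_gt_a4c1).
have : gam * z k <= (a3 - mu * c4) * z k by rewrite ler_wpM2r // ge_min lexx.
have : gam * e k <= (mu * c3 - a4 - a4 * c2 / c1) * e k.
  by rewrite ler_wpM2r // ge_min lexx orbT.
by have := V_step k; rewrite /L /nu; lra.
Qed.

Lemma combined_lyapunov_contraction k :
  L k.+1 <= rho * L k + (s k + mu * se k).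
Proof.
have L_ge0 : 0 <= L k.
  apply: le_trans (combined_lyapunov_lower k).
  by rewrite mulr_ge0 ?addr_ge0 // ltW.
have : gam / K * L k <= gam * (z k + e k).
  rewrite mulrAC ler_pdivrMr // -mulrA; apply: ler_wpM2l; first exact: ltW.
  by rewrite mulrC; exact: combined_lyapunov_upper.
have : (1 - gam / K) * L k <= rho * L k by rewrite ler_wpM2r // le_max lexx.
by have := combined_lyapunov_decrease k; lra.
Qed.

End Trajectory.

Lemma lyapunov_pair_exponential_bound :
  exists c lam g m : R, [/\ 0 < c, 0 < lam < 1, 0 < g & 0 < m] /\
  forall z e V W s se : nat -> R,
    (forall k, 0 <= z k) -> (forall k, 0 <= e k) ->
    (forall k, 0 <= s k) -> (forall k, 0 <= se k) ->
    (forall k, a1 * z k <= V k <= a2 * z k) ->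
    (forall k, V k.+1 <= V k - a3 * z k + a4 * (e k + e k.+1) + s k) ->
    (forall k, c1 * e k <= W k <= c2 * e k) ->
    (forall k, W k.+1 <= W k - c3 * e k + c4 * z k + se k) ->
    forall k, Num.sqrt (z k + e k) <= c * lam ^+ k * Num.sqrt (z 0%N + e 0%N)
      + \sum_(i < k.+1) lam ^+ i * Num.sqrt (g * (s (k - i)%N + m * se (k - i)%N)).
Proof.
have mu_gt0 : 0 < mu by have [lt1 _ _] := mu_bounds; apply: lt_trans lt1; rewrite divr_gt0.
exists (Num.sqrt (K / kap)), (Num.sqrt rho), (kap * rho)^-1, mu.
split; first split=> //.
- by rewrite sqrtr_gt0 divr_gt0.
- by rewrite sqrtr_gt0 rho_gt0 -sqrtr1 ltr_sqrt.
- by rewrite invr_gt0 mulr_gt0.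
move=> z e V W s se z_ge0 e_ge0 s_ge0 se_ge0 V_bounds V_step W_bounds W_step.
apply: (contraction_sqrt_bound (fun k => z k + e k) (fun k => V k + nu * W k)
          (fun k => s k + mu * se k)) => //.
- exact: ltW.
- by move=> k; rewrite addr_ge0.
- by move=> k; rewrite addr_ge0 // mulr_ge0 // ltW.
- exact: combined_lyapunov_lower.
- exact: combined_lyapunov_upper.
- exact: (combined_lyapunov_contraction z e).
Qed.

End LyapunovPair.

Theorem theorem3 (R : realType) (nx nxh nu nw ny nz : nat)
  (Xi : set 'rV[R]_nx) (Xih : set 'rV[R]_nxh) (Ups : set 'rV[R]_ny)
  (U : set 'rV[R]_nu)
  (F : 'rV[R]_nx -> 'rV[R]_nu -> 'rV[R]_nw -> 'rV[R]_nx)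
  (H : 'rV[R]_nx -> 'rV[R]_nu -> 'rV[R]_nw -> 'rV[R]_ny)
  (Omega : 'rV[R]_nx -> 'rV[R]_nu -> set 'rV[R]_nw)
  (Phi : forall k : nat, 'rV[R]_nxh -> ('I_k -> 'rV[R]_nu) ->
                         ('I_k -> 'rV[R]_ny) -> 'rV[R]_nxh)
  (kappa : 'rV[R]_nxh -> 'rV[R]_nu)
  (Geps : 'rV[R]_nx -> 'rV[R]_nxh)
  (G : 'rV[R]_nxh -> 'rV[R]_nz)
  (* standing assumptions *)
  (hXi : closed Xi) (hXih : closed Xih) (hUps : closed Ups)
  (hOmega0 : forall x v, Xi x -> U v -> Omega x v 0)
  (hF : forall x v o, Xi x -> U v -> Omega x v o -> Xi (F x v o))
  (hH : forall x v o, Xi x -> U v -> Omega x v o -> Ups (H x v o))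
  (hPhi : forall k x us ys, Xih x -> (forall i, U (us i)) ->
            (forall i, Ups (ys i)) -> Xih (Phi k x us ys))
  (hkappa : forall x, Xih x -> U (kappa x))
  (hGeps : forall x, Xi x -> Xih (Geps x))
  (* hypotheses of the theorem *)
  (hPhi0 : forall x us ys, Phi 0%N x us ys = x)
  (a1 a2 a3 a4 c1 c2 c3 c4 : R)
  (ha1 : 0 < a1) (ha2 : 0 < a2) (ha3 : 0 < a3) (ha4 : 0 < a4)
  (hc1 : 0 < c1) (hc2 : 0 < c2) (hc3 : 0 < c3) (hc4 : 0 < c4)
  (S : set ('rV[R]_nx * 'rV[R]_nxh))
  (hSsub : forall p, S p -> Xi p.1 /\ Xih p.2)
  (hS : RPI F H Omega Phi kappa S)
  (V : 'rV[R]_nxh -> R) (Veps : 'rV[R]_nx -> 'rV[R]_nxh -> R)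
  (hV0 : forall x, Xih x -> 0 <= V x)
  (hVeps0 : forall x x', Xi x -> Xih x' -> 0 <= Veps x x')
  (sigma sigmae : R -> R) (hsigma : classK sigma) (hsigmae : classK sigmae)
  (hrat1 : a4 * c4 / (a3 * c1) < 1)
  (hrat2 : a4 * c4 / (a3 * c3) < c1 / (c1 + c2))
  (hLyap : forall xbar xi xih u w y,
     closed_loop_traj F H Omega Phi kappa xbar xi xih u w y ->
     S (xi 0%N, xbar) ->
     forall k : nat,
       let zeta := fun j => G (xih j) in
       let eps := fun j => Geps (xi j) - xih j in
       a1 * enorm (zeta k) ^+ 2 <= V (xih k) <= a2 * enorm (zeta k) ^+ 2 /\
       V (xih k.+1) <= V (xih k) - a3 * enorm (zeta k) ^+ 2
                       + a4 * enorm (row_mx (eps k) (eps k.+1)) ^+ 2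
                       + sigma (enorm (w k)) /\
       c1 * enorm (eps k) ^+ 2 <= Veps (xi k) (xih k)
                                <= c2 * enorm (eps k) ^+ 2 /\
       Veps (xi k.+1) (xih k.+1) <= Veps (xi k) (xih k)
                       - c3 * enorm (eps k) ^+ 2 + c4 * enorm (zeta k) ^+ 2
                       + sigmae (enorm (w k))) :
  exists (czeta lzeta : R) (sigmaz : R -> R),
    0 < czeta /\ 0 < lzeta < 1 /\ classK sigmaz /\
    forall xbar xi xih u w y,
      closed_loop_traj F H Omega Phi kappa xbar xi xih u w y ->
      S (xi 0%N, xbar) ->
      forall k : nat,
        enorm (row_mx (G (xih k)) (Geps (xi k) - xih k))
        <= czeta * lzeta ^+ k * enorm (row_mx (G xbar) (Geps (xi 0%N) - xbar))
           + \sum_(i < k.+1) lzeta ^+ i * sigmaz (enorm (w (k - i)%N)).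
Proof.
have [c [lam [g [m [[c_gt0 lam_bounds g_gt0 m_gt0] bound]]]]] :=
  lyapunov_pair_exponential_bound ha1 ha2 ha3 ha4 hc1 hc2 hc3 hc4 hrat1 hrat2.
exists c, lam, (fun r => Num.sqrt (g * (sigma r + m * sigmae r))).
do 2!split=> //; split; first exact/classK_sqrt/classKZ/classKD/classKZ.
move=> xbar xi xih u w y traj S0 k.
have xih0 : xih 0%N = xbar by have [_ [_ [_ [-> _]]]] := traj 0%N; rewrite hPhi0.
rewrite -xih0 !enorm_row_mx.
have lyap j := hLyap _ _ _ _ _ _ traj S0 j.
apply: (bound (fun j => enorm (G (xih j)) ^+ 2) (fun j => enorm (Geps (xi j) - xih j) ^+ 2)
  (fun j => V (xih j)) (fun j => Veps (xi j) (xih j))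
  (fun j => sigma (enorm (w j))) (fun j => sigmae (enorm (w j)))) => j /=.
- exact: sqr_ge0.
- exact: sqr_ge0.
- exact: classK_ge0 hsigma (enorm_ge0 _).
- exact: classK_ge0 hsigmae (enorm_ge0 _).
- by case: (lyap j).
- by case: (lyap j) => _ [+ _]; rewrite enorm_row_mx_sqr.
- by case: (lyap j) => _ [_ []].
- by case: (lyap j) => _ [_ [_ ]].
Qed.
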